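(* If a graph $G$ with at least two vertices belongs to $\mathcal{S}_3$, then $|E(G)|\ge 3|V(G)|-2$.
   Context: Graphs may have parallel edges but no loops. $G\in\mathcal{S}_3$ means: for every $\beta:V(G)\to\mathbb{Z}_3$ with $\sum_v\beta(v)\equiv0\pmod3$ there is a strongly-connected orientation $D$ of $G$ with $d^+_D(v)-d^-_D(v)\equiv\beta(v)\pmod3$ for all $v$. *)

From HB Require Import structures.
From mathcomp Require Import all_boot all_order all_algebra.
Set Implicit Arguments. Unset Strict Implicit. Unset Printing Implicit Defensive.
Import GRing.Theory.

(* A multigraph (parallel edges allowed) on vertex set V with edge set E:
   each edge e has endpoints (ends e).1 and (ends e).2. *)
Definition loopless (V E : finType) (ends : E -> V * V) : Prop :=
  forall e, (ends e).1 != (ends e).2.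

Definition tail (V E : finType) (ends : E -> V * V) (D : E -> bool) (e : E) : V :=
  if D e then (ends e).1 else (ends e).2.
Definition head (V E : finType) (ends : E -> V * V) (D : E -> bool) (e : E) : V :=
  if D e then (ends e).2 else (ends e).1.

Definition outdeg (V E : finType) (ends : E -> V * V) (D : E -> bool) (v : V) : nat :=
  #|[set e | tail ends D e == v]|.
Definition indeg (V E : finType) (ends : E -> V * V) (D : E -> bool) (v : V) : nat :=
  #|[set e | head ends D e == v]|.

Definition arc (V E : finType) (ends : E -> V * V) (D : E -> bool) : rel V :=
  fun u w => [exists e, (tail ends D e == u) && (head ends D e == w)].

Definition strongly_connected (V E : finType) (ends : E -> V * V) (D : E -> bool) : Prop :=
  forall u w : V, connect (arc ends D) u w.

Definition in_S3 (V E : finType) (ends : E -> V * V) : Prop :=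
  forall beta : V -> 'Z_3, (\sum_(v : V) beta v = 0)%R ->
    exists D : E -> bool, strongly_connected ends D /\
      forall v : V, ((outdeg ends D v)%:R - (indeg ends D v)%:R = beta v :> 'Z_3)%R.

From Pilot Require Import Defs.
From HB Require Import structures.
From mathcomp Require Import all_boot all_order all_algebra.
From mathcomp Require Import zify ring.
Import GRing.Theory.

Set Implicit Arguments.
Unset Strict Implicit.
Unset Printing Implicit Defensive.

(* Prescribe, through the S_3 property, an orientation in which the
   outdegree of a chosen vertex u is |E| mod 3 and every other outdegree is
   divisible by 3.  Strong connectivity forces every
   outdegree to be positive, so all vertices but one have outdegree at
   least 3, and summing outdegrees gives |E| >= 3(|V| - 1) + 1. *)

Lemma sum_card_preim (V E : finType) (f : E -> V) :
  \sum_(v : V) #|[set e | f e == v]| = #|E|.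
Proof.
rewrite -sum1_card (partition_big f predT) //=.
by apply: eq_bigr => v _; rewrite sum1dep_card.
Qed.

Section Orientation.
Variables (V E : finType) (ends : E -> V * V).

Lemma sum_outdeg (D : E -> bool) : \sum_(v : V) outdeg ends D v = #|E|.
Proof. exact: sum_card_preim. Qed.

Lemma sum_indeg (D : E -> bool) : \sum_(v : V) indeg ends D v = #|E|.
Proof. exact: sum_card_preim. Qed.

Definition degree (v : V) : nat :=
  outdeg ends (fun _ => true) v + indeg ends (fun _ => true) v.

Lemma outdeg_add_indeg (D : E -> bool) (v : V) :
  outdeg ends D v + indeg ends D v = degree v.
Proof.
rewrite /degree /outdeg /indeg -!sum1dep_card.
rewrite !(big_mkcond (fun e => _ == v)) -!big_split /=.
apply: eq_bigr => e _; rewrite /tail /Defs.head.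
by case: (D e) => //=; rewrite addnC.
Qed.

Lemma sum_degree : \sum_(v : V) degree v = (#|E| + #|E|)%N.
Proof. by rewrite big_split /= sum_outdeg sum_indeg. Qed.

Lemma outdeg_gt0 (D : E -> bool) (v : V) :
  strongly_connected ends D -> 1 < #|V| -> 0 < outdeg ends D v.
Proof.
move=> scD V_gt1.
have [w] : exists w, w \in predC1 v by apply/card_gt0P; rewrite cardC1; lia.
rewrite inE => wv.
case/connectP: (scD v w) => [[|y p]] /=; first by move=> _ w_eq; rewrite w_eq eqxx in wv.
case/andP=> /existsP [e /andP [/eqP tail_e _]] _ _.
by apply/card_gt0P; exists e; rewrite inE tail_e.
Qed.

End Orientation.

Lemma Z3_sub_eq_oppD_sub (o i : 'Z_3) : (o - i = - (o + i) - o)%R.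
Proof.
have three0 : (3%:R : 'Z_3)%R = 0%R by apply: val_inj.
transitivity (- (o + i) - o + o * 3%:R)%R; first ring.
by rewrite three0 mulr0 addr0.
Qed.

Lemma Z3_nat_eq0 (n : nat) : (n%:R : 'Z_3)%R = 0%R -> 0 < n -> 3 <= n.
Proof. by move=> /(congr1 (@nat_of_ord _)); rewrite val_Zp_nat //= => n_mod3; lia. Qed.

(* In Z_3 the net outdegree is minus the total degree minus the outdegree,
   so prescribing net outdegrees is the same as prescribing outdegrees. *)
Lemma in_S3_outdeg (V E : finType) (ends : E -> V * V) (r : V -> 'Z_3) :
  in_S3 ends -> (\sum_(v : V) r v = #|E|%:R)%R ->
  exists D : E -> bool, strongly_connected ends D /\
    forall v : V, ((outdeg ends D v)%:R = r v :> 'Z_3)%R.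
Proof.
move=> S3 sum_r.
pose beta v : 'Z_3 := (- (degree ends v)%:R - r v)%R.
have sum_beta : (\sum_(v : V) beta v = 0)%R.
  rewrite big_split /= sumrN -natr_sum sum_degree sumrN sum_r -opprD -natrD.
  have -> : (#|E| + #|E| + #|E| = #|E| * 3)%N by lia.
  by rewrite natrM (pchar_Zp (isT : 1 < 3)) mulr0 oppr0.
have [D [scD netD]] := S3 beta sum_beta.
exists D; split=> // v; have := netD v.
rewrite Z3_sub_eq_oppD_sub -natrD outdeg_add_indeg.
by move=> /addrI /oppr_inj.
Qed.

Theorem mainTheorem7 (V E : finType) (ends : E -> V * V) :
  loopless ends -> 2 <= #|V| -> in_S3 ends -> 3 * #|V| - 2 <= #|E|.
Proof.
move=> _ V_gt1 S3.
have /card_gt0P [u _] := ltnW V_gt1.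
pose r v : 'Z_3 := if v == u then #|E|%:R%R else 0%R.
have sum_r : (\sum_(v : V) r v = #|E|%:R)%R by rewrite -big_mkcond big_pred1_eq.
have [D [scD outD]] := in_S3_outdeg S3 sum_r.
have out3 v : v != u -> 3 <= outdeg ends D v.
  move=> vu; apply: Z3_nat_eq0; last exact: outdeg_gt0.
  by rewrite outD /r (negbTE vu).
have out_rest : (#|V| - 1) * 3 <= \sum_(v | v != u) outdeg ends D v.
  by rewrite subn1 -(cardC1 u) -sum_nat_const leq_sum.
rewrite -(sum_outdeg ends D) (bigD1 u) //=.
apply: leq_trans (leq_add (outdeg_gt0 u scD V_gt1) out_rest).
(* Stated for an arbitrary [n]: the two occurrences of [#|V|] here carry
   different coercions, which [lia] does not identify. *)
have count_bound n : 3 * n - 2 <= 1 + (n - 1) * 3 by lia.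
exact: count_bound.
Qed.
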